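(* Let $p\in\mathbb R^I$ be a probability vector with positive entries and suppose $\vartheta_p>0$. Then there exist nonnegative integers $\{\widetilde N^n_{ij}:(i,j)\in\mathcal E,\ n\in\mathbb N\}$ and a constant $C_0>0$ such that, for all sufficiently large $n$: (i) $\lambda^n_i=\sum_{j\in\mathcal J(i)}\mu^n_{ij}\widetilde N^n_{ij}-\vartheta_p\,p_i\sqrt n+\epsilon^n_i$ for all $i\in\mathcal I$, where $\epsilon^n_i/\sqrt n\to0$ as $n\to\infty$; (ii) $|N^n_{ij}-\widetilde N^n_{ij}|\le C_0\sqrt n$ for all $(i,j)\in\mathcal E$; (iii) $\sum_{i\in\mathcal I(j)}\widetilde N^n_{ij}=N^n_j$ for all $j\in\mathcal J$.
   Context: Network and parameters: $\mathcal I=\{1,\dots,I\}$, $\mathcal J=\{1,\dots,J\}$, edges $\mathcal E\subset\mathcal I\times\mathcal J$ with the bipartite graph $\mathcal G=(\mathcal I\cup\mathcal J,\mathcal E)$ a tree; $i\sim j$ iff $(i,j)\in\mathcal E$, $\mathcal J(i)=\{j:i\sim j\}$, $\mathcal I(j)=\{i:i\sim j\}$; $\mathbb R^{\mathcal G}$ denotes arrays in $\mathbb R^{I\times J}$ vanishing off $\mathcal E$, $\mathbb R^{\mathcal G}_+$ those with nonnegative entries. For each $n\in\mathbb N$: arrival rates $\lambda^n_i>0$, service rates $\mu^n_{ij}>0$, pool sizes $N^n_j\in\mathbb N$, with $\lambda^n_i/n\to\lambda_i>0$, $N^n_j/n\to\nu_j>0$, $\mu^n_{ij}\to\mu_{ij}>0$,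 $(\lambda^n_i-n\lambda_i)/\sqrt n\to\hat\lambda_i$, $\sqrt n(\mu^n_{ij}-\mu_{ij})\to\hat\mu_{ij}$, $\sqrt n(N^n_j/n-\nu_j)\to\hat\nu_j$ (real limits). Complete resource pooling: the LP ''minimize $\max_j\sum_i\xi_{ij}$ over $\xi\in\mathbb R^{\mathcal G}_+$ subject to $\sum_j\mu_{ij}\nu_j\xi_{ij}=\lambda_i$ $\forall i$'' has a unique solution $\xi^*$, with $\sum_i\xi^*_{ij}=1$ $\forall j$ and $\xi^*_{ij}>0$ for $i\sim j$; $z^*_{ij}:=\xi^*_{ij}\nu_j$; $\theta_j:=\hat\nu_j+\sum_{i\in\mathcal I(j)}(\hat\mu_{ij}/\mu_{ij})z^*_{ij}$. SWSS: for a probability vector $p$ with positive entries, $\vartheta_p$ is the (unique) optimal value of: maximize $\vartheta$ over $(\vartheta,\kappa)\in\mathbb R\times\mathbb R^{\mathcal G}$ subject to $\hat\lambda_i\le\sum_{j\in\mathcal J(i)}\mu_{ij}\kappa_{ij}-\vartheta p_i$ $\forall i$ and $\sum_{i\in\mathcal I(j)}\kappa_{ij}=\theta_j$ $\forall j$. $N^n_{ij}$ ($(i,j)\in\mathcal E$) are nonnegative integers with $\lfloor\xi^*_{ij}N^n_j\rfloor\le N^n_{ij}\le\lceil\xi^*_{ij}N^n_j\rceil$ and $\sum_{i\in\mathcal I(j)}N^n_{ij}=N^n_j$. *)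

From HB Require Import structures.
From mathcomp Require Import all_boot all_order all_algebra.
From mathcomp Require Import all_classical all_reals all_analysis.
Set Implicit Arguments. Unset Strict Implicit. Unset Printing Implicit Defensive.
Import Order.TTheory GRing.Theory Num.Theory.
Local Open Scope ring_scope.

Definition bvert (I J : nat) : finType := ('I_I + 'I_J)%type.

Definition badj (I J : nat) (E : 'I_I -> 'I_J -> bool) : rel (bvert I J) :=
  fun u v => match u, v with
             | inl i, inr j => E i j
             | inr j, inl i => E i j
             | _, _ => false
             end.

Definition bconnected I J (E : 'I_I -> 'I_J -> bool) : Prop :=
  forall u v : bvert I J, connect (badj E) u v.

Definition bacyclic I J (E : 'I_I -> 'I_J -> bool) : Prop :=
  forall (x : bvert I J) (p : seq (bvert I J)),
    (2 <= size p)%N -> uniq (x :: p) -> path (badj E) x p ->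
    ~~ badj E (last x p) x.

Definition is_tree I J (E : 'I_I -> 'I_J -> bool) : Prop :=
  bconnected E /\ bacyclic E.

Definition crp_feasible (R : realType) I J (E : 'I_I -> 'I_J -> bool)
  (mu : 'I_I -> 'I_J -> R) (nu : 'I_J -> R) (lam : 'I_I -> R)
  (xi : 'I_I -> 'I_J -> R) : Prop :=
  (forall i j, ~~ E i j -> xi i j = 0) /\
  (forall i j, 0 <= xi i j) /\
  (forall i, \sum_(j < J) mu i j * nu j * xi i j = lam i).

(* objective max_j sum_i ξ_ij (entries are nonnegative, so 0 is a neutral base) *)
Definition crp_obj (R : realType) I J (xi : 'I_I -> 'I_J -> R) : R :=
  \big[Num.max/0]_(j < J) \sum_(i < I) xi i j.

Definition crp_unique_solution (R : realType) I J (E : 'I_I -> 'I_J -> bool)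
  (mu : 'I_I -> 'I_J -> R) (nu : 'I_J -> R) (lam : 'I_I -> R)
  (xi : 'I_I -> 'I_J -> R) : Prop :=
  crp_feasible E mu nu lam xi /\
  (forall xi', crp_feasible E mu nu lam xi' -> crp_obj xi <= crp_obj xi') /\
  (forall xi', crp_feasible E mu nu lam xi' -> crp_obj xi' <= crp_obj xi ->
     xi' = xi).

(* θ_j := ν̂_j + Σ_{i ∈ I(j)} (μ̂_ij / μ_ij) z*_ij,  z*_ij = ξ*_ij ν_j *)
Definition theta (R : realType) I J (E : 'I_I -> 'I_J -> bool)
  (mu muh : 'I_I -> 'I_J -> R) (nu nuh : 'I_J -> R)
  (xi : 'I_I -> 'I_J -> R) (j : 'I_J) : R :=
  nuh j + \sum_(i < I | E i j) (muh i j / mu i j) * (xi i j * nu j).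

Definition swss_feasible (R : realType) I J (E : 'I_I -> 'I_J -> bool)
  (mu : 'I_I -> 'I_J -> R) (lamh : 'I_I -> R) (th : 'I_J -> R)
  (p : 'I_I -> R) (v : R) (kappa : 'I_I -> 'I_J -> R) : Prop :=
  (forall i j, ~~ E i j -> kappa i j = 0) /\
  (forall i, lamh i <= \sum_(j < J | E i j) mu i j * kappa i j - v * p i) /\
  (forall j, \sum_(i < I | E i j) kappa i j = th j).

Definition swss_value (R : realType) I J (E : 'I_I -> 'I_J -> bool)
  (mu : 'I_I -> 'I_J -> R) (lamh : 'I_I -> R) (th : 'I_J -> R)
  (p : 'I_I -> R) (v : R) : Prop :=
  (exists kappa, swss_feasible E mu lamh th p v kappa) /\
  (forall w kappa, swss_feasible E mu lamh th p w kappa -> w <= v).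

From HB Require Import structures.
From mathcomp Require Import all_boot all_order all_algebra.
From mathcomp Require Import all_classical all_reals all_analysis.
From mathcomp Require Import lra ring.
Import Order.TTheory GRing.Theory Num.Theory numFieldNormedType.Exports.
Local Open Scope classical_set_scope.
Local Open Scope ring_scope.
Set Implicit Arguments. Unset Strict Implicit. Unset Printing Implicit Defensive.

(* Take an optimal pair (vartheta_p, kappa) of the SWSS program.  On a connected
   network every class constraint of that program is tight at the optimum:
   otherwise a column-balanced array (built by propagating servers along the
   edges of the graph) would allow a larger value (swss_tight).  Put
     delta_ij := kappa_ij - xi*_ij nuh_j - (muh_ij / mu_ij) z*_ij,
   an edge array with vanishing column sums.  The staffing N~^n is N^n plus an
   integer rounding of delta sqrt n that preserves column sums
   (balanced_round); since N^n_ij grows linearly it stays nonnegative, which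
   gives (ii) and (iii) (section Correction).  Finally a first-order expansion
   of lambda^n_i - sum_j mu^n_ij N~^n_ij + vartheta p_i sqrt n in the scale
   sqrt n (imbalance_expansion) has limit lamh_i - sum_j mu_ij kappa_ij +
   vartheta p_i, which is 0 by tightness: this is (i). *)

Section Rebalancing.
Variables (R : realType) (I J : nat) (E : 'I_I -> 'I_J -> bool).
Variable mu : 'I_I -> 'I_J -> R.
Hypothesis mu_pos : forall i j, E i j -> 0 < mu i j.

(* Column sums and class loads of an edge array d : the change of pool sizes
   and of the service capacity offered to each class when d servers move. *)
Definition colsum (d : 'I_I -> 'I_J -> R) (j : 'I_J) := \sum_(i < I | E i j) d i j.
Definition load (d : 'I_I -> 'I_J -> R) (i : 'I_I) := \sum_(j < J | E i j) mu i j * d i j.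

Definition unit_arr (i : 'I_I) (j : 'I_J) : 'I_I -> 'I_J -> R :=
  fun k l => ((k == i) && (l == j))%:R.

Lemma colsum_lin (a b : R) f g j :
  colsum (fun k l => a * f k l + b * g k l) j = a * colsum f j + b * colsum g j.
Proof. by rewrite /colsum big_split /= -!mulr_sumr. Qed.

Lemma load_lin (a b : R) f g i :
  load (fun k l => a * f k l + b * g k l) i = a * load f i + b * load g i.
Proof.
rewrite /load !mulr_sumr -big_split /=; apply: eq_bigr => l _.
by rewrite mulrDr !mulrA ![_ * mu _ _]mulrC.
Qed.

Lemma colsum_unit i j l : E i j -> colsum (unit_arr i j) l = (l == j)%:R.
Proof.
move=> Eij; rewrite /colsum /unit_arr; have [->|_] := eqVneq l j.
  rewrite (bigD1 i) //= eqxx /= big1 ?addr0 // => k /andP[_ /negbTE ->] //.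
by rewrite big1 // => k _; rewrite andbF.
Qed.

Lemma load_unit i j k : E i j -> load (unit_arr i j) k = (k == i)%:R * mu i j.
Proof.
move=> Eij; rewrite /load /unit_arr; have [->|_] := eqVneq k i.
  rewrite (bigD1 j) //= !eqxx mulr1 mul1r big1 ?addr0 // => l /andP[_ /negbTE ->].
  by rewrite mulr0.
by rewrite mul0r big1 // => l _; rewrite mulr0.
Qed.

(* Vertices that can be "fed" without hurting any class other than i0:
   a class i is fed by a column-balanced array raising the load of i;
   a pool j is fed by an array that frees one server of pool j. *)
Definition feedable (i0 : 'I_I) (v : bvert I J) : Prop :=
  match v with
  | inl i => i = i0 \/ exists d, (forall l, colsum d l = 0) /\ 0 < load d i /\
                         (forall k, k != i0 -> 0 <= load d k)
  | inr j => exists d, (forall l, colsum d l = - (l == j)%:R) /\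
                         (forall k, k != i0 -> 0 <= load d k)
  end.

(* Feedability propagates along edges: a freed server of pool j can serve a
   neighbouring class, and a fed class can release a server to a neighbouring
   pool at a cost it can pay for. *)
Lemma feedable_step i0 u v : feedable i0 u -> badj E u v -> feedable i0 v.
Proof.
case: u => [i|j]; case: v => [i'|j'] //= Fu Eij.
- case: Fu => [<-|[d [cd [Ldi Ld]]]].
    exists (fun k l => 0 * unit_arr i j' k l + (-1) * unit_arr i j' k l); split.
      by move=> l; rewrite colsum_lin colsum_unit // mul0r add0r mulN1r.
    by move=> k nk; rewrite load_lin load_unit // (negbTE nk) !mul0r mulr0 addr0.
  exists (fun k l => (mu i j' / load d i) * d k l + (-1) * unit_arr i j' k l); split.
    by move=> l; rewrite colsum_lin colsum_unit // cd mulr0 add0r mulN1r.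
  move=> k nk; rewrite load_lin load_unit //; have [->|nki] := eqVneq k i.
    by rewrite mul1r mulrVK ?unitfE ?gt_eqF // mulN1r subrr.
  by rewrite mul0r mulr0 addr0 mulr_ge0 ?Ld // divr_ge0 // ltW // mu_pos.
- have [->|ni] := eqVneq i' i0; first by left.
  right; case: Fu => d [cd Ld].
  exists (fun k l => 1 * d k l + 1 * unit_arr i' j k l); split.
    by move=> l; rewrite colsum_lin colsum_unit // cd !mul1r addNr.
  split.
    by rewrite load_lin load_unit // eqxx !mul1r ltr_wpDl // ?Ld // mu_pos.
  move=> k nk; rewrite load_lin load_unit // !mul1r addr_ge0 ?Ld //.
  by rewrite mulr_ge0 ?ler0n // ltW // mu_pos.
Qed.

Lemma feedable_all i0 : bconnected E -> forall v, feedable i0 v.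
Proof.
move=> conn v; have /connectP[s ps ->] := conn (inl i0) v.
have : feedable i0 (inl i0) by left.
elim: s (inl i0) ps => [|y s IH] x //= /andP[exy ps] Fx.
exact: IH ps (feedable_step Fx exy).
Qed.

Lemma balanced_supply i0 (b : 'I_I -> R) : bconnected E -> (forall i, 0 <= b i) ->
  exists D, (forall l, colsum D l = 0) /\ (forall k, k != i0 -> b k <= load D k).
Proof.
move=> conn b_ge0.
suff [D [cD LD]] : exists D, (forall l, colsum D l = 0) /\
    (forall k, k != i0 -> 0 <= load D k /\ (k \in enum 'I_I -> b k <= load D k)).
  by exists D; split=> // k nk; apply: (LD k nk).2; rewrite mem_enum.
elim: (enum 'I_I) => [|k s [D [cD LD]]].
  exists (fun _ _ => 0); split; first by move=> l; rewrite /colsum big1.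
  by move=> k _; split=> //; rewrite /load big1 // => j _; rewrite mulr0.
have [->|nk] := eqVneq k i0.
  exists D; split=> // k' nk'; have [L0 Ls] := LD k' nk'; split=> // /predU1P[e|].
    by move: nk'; rewrite e eqxx.
  exact: Ls.
case: (feedable_all i0 conn (inl k)) => [e|[d [cd [Ldk Ld]]]].
  by move: nk; rewrite e eqxx.
exists (fun i j => 1 * D i j + (b k / load d k) * d i j); split.
  by move=> l; rewrite colsum_lin cD cd !mulr0 addr0.
move=> k' nk'; rewrite load_lin mul1r.
have scaled_ge0 : 0 <= b k / load d k * load d k'.
  by rewrite mulr_ge0 ?Ld // divr_ge0 // ltW.
have [L0 Ls] := LD k' nk'; split; first exact: addr_ge0.
case/predU1P=> [ek|ks].
  rewrite ek in L0 *; rewrite mulrVK ?unitfE ?gt_eqF //; exact: ler_wpDl.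
by apply: le_trans (Ls ks) _; rewrite lerDl.
Qed.

(* At an optimum of the SWSS program every class constraint is tight: a slack
   constraint at class i0 could be traded, through a balanced array supplying
   load p to the other classes, for a strictly larger value. *)
Lemma swss_tight lamh th p v kappa :
  bconnected E -> (forall i, 0 < p i) ->
  swss_value E mu lamh th p v -> swss_feasible E mu lamh th p v kappa ->
  forall i, lamh i = load kappa i - v * p i.
Proof.
move=> conn p_pos [_ v_max] [_ [kap_lam kap_th]] i0.
apply/eqP; rewrite eq_le kap_lam /= leNgt; apply/negP => slack.
set y := load kappa i0 - v * p i0 - lamh i0.
have y_pos : 0 < y by rewrite subr_gt0.
have [D [cD LD]] := balanced_supply i0 conn (fun i => ltW (p_pos i)).
set t := y / (`|load D i0| + p i0).
have den_pos : 0 < `|load D i0| + p i0 by rewrite ltr_wpDl.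
have t_pos : 0 < t by rewrite divr_gt0.
have t_den : t * `|load D i0| + t * p i0 = y by rewrite -mulrDr /t divfK ?gt_eqF.
pose kap := fun i j => if E i j then 1 * kappa i j + t * D i j else 0.
have load_kap i : load kap i = load kappa i + t * load D i.
  rewrite -[load kappa i]mul1r -(load_lin 1 t kappa D i) /load.
  by apply: eq_bigr => j Eij; rewrite /kap Eij.
suff /v_max : swss_feasible E mu lamh th p (v + t) kap by rewrite gerDl leNgt t_pos.
split; first by move=> i j /negbTE nE; rewrite /kap nE.
split=> [i|j].
  rewrite -/(load kap i) load_kap mulrDl.
  have [->|ni] := eqVneq i i0.
    have : - `|load D i0| <= load D i0 by rewrite lerNl -normrN ler_norm.
    move=> /(ler_wpM2l (ltW t_pos)).
    rewrite mulrN /y in t_den *; lra.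
  have := ler_wpM2l (ltW t_pos) (LD i ni).
  have := kap_lam i; rewrite -/(load kappa i); lra.
transitivity (colsum (fun i j => 1 * kappa i j + t * D i j) j).
  by apply: eq_bigr => i Eij; rewrite /kap Eij.
by rewrite colsum_lin cD {1}/colsum kap_th mulr0 addr0 mul1r.
Qed.

End Rebalancing.

Section Rounding.
Variable R : realType.

Lemma floor_dist (x : R) : `|(Num.floor x)%:~R - x| <= 1.
Proof.
have /andP[f1 f2] := floor_itv x; rewrite intrD in f2.
rewrite ler_norml; apply/andP; split; lra.
Qed.

Lemma floor_ceil_dist (x : R) (m : nat) :
  (Num.floor x <= m%:Z)%R -> (m%:Z <= Num.ceil x)%R -> `|m%:R - x| <= 1.
Proof.
move=> fm mc.
have fm' : (Num.floor x)%:~R <= m%:R :> R by rewrite pmulrn ler_int.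
have mc' : m%:R <= (Num.ceil x)%:~R :> R by rewrite pmulrn ler_int.
have /andP[_ f2] := floor_itv x; have /andP[c1 _] := ceil_itv x.
rewrite intrD in f2; rewrite intrB in c1.
rewrite ler_norml; apply/andP; split; lra.
Qed.

Variables (I J : nat) (E : 'I_I -> 'I_J -> bool).

(* Integer rounding of an edge array that preserves column sums: every entry
   is rounded down, except the entry of one distinguished class per pool,
   which absorbs the rounding errors of the others. *)
Definition balanced_round (a : 'I_I -> 'I_J -> R) (i : 'I_I) (j : 'I_J) : int :=
  if [pick k | E k j] == Some i then - \sum_(k < I | E k j && (k != i)) Num.floor (a k j)
  else Num.floor (a i j).

Lemma balanced_round_colsum a j : \sum_(i < I | E i j) balanced_round a i j = 0.
Proof.
rewrite /balanced_round; case: pickP => [r Er|none]; last by rewrite big1 // => i; rewrite none.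
rewrite (bigD1 r) //= eqxx [X in _ + X](eq_bigr (fun i => Num.floor (a i j))) ?addNr //.
by move=> i /andP[_ nir]; case: eqP => // -[ri]; rewrite ri eqxx in nir.
Qed.

Lemma balanced_round_dist a i j : \sum_(k < I | E k j) a k j = 0 -> E i j ->
  `|(balanced_round a i j)%:~R - a i j| <= I%:R.
Proof.
move=> a_sum Eij.
have I1 : 1 <= I%:R :> R by rewrite ler1n (leq_ltn_trans (leq0n i) (ltn_ord i)).
rewrite /balanced_round; case: eqP => _; last exact: le_trans (floor_dist _) I1.
have -> : a i j = - \sum_(k < I | E k j && (k != i)) a k j.
  by apply/eqP; rewrite -addr_eq0 -(bigD1 i) //= a_sum.
rewrite rmorphN /= rmorph_sum -opprD normrN -sumrB.
apply: le_trans (ler_norm_sum _ _ _) _.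
apply: le_trans (_ : _ <= \sum_(k < I | E k j && (k != i)) 1) _.
  by apply: ler_sum => k _; apply: floor_dist.
apply: le_trans (_ : _ <= \sum_(k < I) 1) _; last by rewrite sumr_const card_ord.
by rewrite [X in _ <= X](bigID (fun k => E k j && (k != i))) /= lerDl sumr_ge0.
Qed.

End Rounding.

Section SqrtScaling.
Variable R : realType.
Local Notation s n := (Num.sqrt (n%:R : R)).

Lemma sqrt_nat_ge (M : R) : 0 <= M -> \forall n \near \oo, M <= s n.
Proof.
move=> M0; near=> n.
have hn : M ^+ 2 <= n%:R :> R by near: n; exact: nbhs_infty_ger.
by rewrite -[X in X <= _](ger0_norm M0) -sqrtr_sqr ler_wsqrtr.
Unshelve. all: by end_near.
Qed.

Lemma inv_sqrt_cvg0 : (fun n : nat => (s n)^-1) @ \oo --> 0.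
Proof.
apply/cvgr0Pnorm_le => eps eps0.
have e1 : 0 <= eps^-1 + 1 by rewrite addr_ge0 // ltW // invr_gt0.
near=> n.
have hs : eps^-1 < s n.
  by apply: lt_le_trans (_ : _ < eps^-1 + 1) _; [rewrite ltrDl | near: n; exact: sqrt_nat_ge].
have s_pos : 0 < s n by apply: le_lt_trans hs; rewrite invr_ge0 ltW.
by rewrite ger0_norm ?invr_ge0 ?ltW // -(invrK eps) ltf_pV2 ?posrE ?invr_gt0.
Unshelve. all: by end_near.
Qed.

Lemma bounded_div_sqrt_cvg0 (q : nat -> R) (K : R) : 0 <= K ->
  (\forall n \near \oo, `|q n| <= K) -> (fun n : nat => q n / s n) @ \oo --> 0.
Proof.
move=> K0 q_bdd; apply/cvgr0Pnorm_le => eps eps0.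
have e1 : 0 < eps / (K + 1) by rewrite divr_gt0 // ltr_wpDl.
move/cvgr0_norm_le: inv_sqrt_cvg0 => /(_ _ e1) s_small.
near=> n.
have h1 : `|q n| <= K by near: n.
have h2 : `|(s n)^-1| <= eps / (K + 1) by near: n.
rewrite normrM; apply: le_trans (ler_pM _ _ h1 h2) _ => //.
by rewrite mulrA ler_pdivrMr ?ltr_wpDl // mulrC ler_wpM2l ?ltW // ltrDl.
Unshelve. all: by end_near.
Qed.

Lemma linear_dominates_sqrt (a : nat -> R) (alpha K : R) : 0 < alpha -> 0 <= K ->
  (fun n : nat => a n / n%:R) @ \oo --> alpha -> \forall n \near \oo, K * s n <= a n.
Proof.
move=> alpha_pos K0 a_lim.
have half_lt : alpha / 2 < alpha by rewrite ltr_pdivrMr // ltr_pMr // ltr1n.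
have a_ge := cvgr_ge _ a_lim _ half_lt.
have half_pos : 0 < alpha / 2 by rewrite divr_gt0.
have M0 : 0 <= K / (alpha / 2) + 1 by rewrite addr_ge0 // divr_ge0 // ltW.
near=> n.
have sM : K / (alpha / 2) + 1 <= s n by near: n; exact: sqrt_nat_ge.
have an : alpha / 2 <= a n / n%:R by near: n; exact: a_ge.
have s_pos : 0 < s n by apply: lt_le_trans sM; rewrite ltr_wpDl // divr_ge0 // ltW.
have n_sq : n%:R = s n * s n by rewrite -expr2 sqr_sqrtr.
have K_le : K <= s n * (alpha / 2).
  by rewrite -ler_pdivrMr //; apply: le_trans sM; rewrite lerDl.
rewrite n_sq ler_pdivlMr ?mulr_gt0 // in an.
apply: le_trans an; rewrite mulrA.
by rewrite ler_pM2r // mulrC.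
Unshelve. all: by end_near.
Qed.

End SqrtScaling.

Lemma entry_le_sum_norm (R : realType) (I J : nat) (f : 'I_I -> 'I_J -> R) i j :
  `|f i j| <= \sum_(k < I) \sum_(l < J) `|f k l|.
Proof.
apply: le_trans (_ : _ <= \sum_(l < J) `|f i l|) _.
  by rewrite (bigD1 j) //= lerDl sumr_ge0.
by rewrite (bigD1 i) //= lerDl sumr_ge0 // => k _; rewrite sumr_ge0.
Qed.

Section Correction.
Variables (R : realType) (I J : nat) (E : 'I_I -> 'I_J -> bool).
Variables (Nn : nat -> 'I_J -> nat) (nu : 'I_J -> R) (xi : 'I_I -> 'I_J -> R).
Variables (Nij : nat -> 'I_I -> 'I_J -> nat) (delta : 'I_I -> 'I_J -> R).
Hypothesis nu_pos : forall j, 0 < nu j.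
Hypothesis N_lim : forall j, (fun n : nat => (Nn n j)%:R / n%:R) @ \oo --> nu j.
Hypothesis xi_pos : forall i j, E i j -> 0 < xi i j.
Hypothesis Nij_floor : forall n i j, E i j -> Num.floor (xi i j * (Nn n j)%:R) <= (Nij n i j)%:Z.
Hypothesis Nij_ceil : forall n i j, E i j -> (Nij n i j)%:Z <= Num.ceil (xi i j * (Nn n j)%:R).
Hypothesis Nij_sum : forall n j, (\sum_(i < I | E i j) Nij n i j)%N = Nn n j.
Hypothesis delta_sum : forall j, \sum_(i < I | E i j) delta i j = 0.
Local Notation s n := (Num.sqrt (n%:R : R)).

Definition correction (n : nat) : 'I_I -> 'I_J -> int :=
  balanced_round E (fun i j => delta i j * s n).

Definition Ntilde (n : nat) (i : 'I_I) (j : 'I_J) : nat := absz ((Nij n i j)%:Z + correction n i j).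

Lemma Nij_dist n i j : E i j -> `|(Nij n i j)%:R - xi i j * (Nn n j)%:R| <= 1.
Proof. by move=> Eij; apply: floor_ceil_dist; [apply: Nij_floor | apply: Nij_ceil]. Qed.

Lemma correction_dist n i j : E i j ->
  `|(correction n i j)%:~R - delta i j * s n| <= I%:R.
Proof. by apply: balanced_round_dist; rewrite -mulr_suml delta_sum mul0r. Qed.

(* Since N^n_ij grows linearly, the O(sqrt n) correction eventually keeps it
   nonnegative. *)
Lemma corrected_ge0 : \forall n \near \oo, forall i j, E i j ->
  (0 <= (Nij n i j)%:Z + correction n i j)%R.
Proof.
apply: filter_forall => i; apply: filter_forall => j.
case: (boolP (E i j)) => Eij; last exact: nearW.
set K := 1 + I%:R + `|delta i j|.
have K0 : 0 <= K by rewrite !addr_ge0.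
have xiN_lim : (fun n : nat => xi i j * (Nn n j)%:R / n%:R) @ \oo --> xi i j * nu j.
  by under eq_fun do rewrite -mulrA; apply: cvgM; [exact: cvg_cst | exact: N_lim].
have xiN_ge := linear_dominates_sqrt (mulr_gt0 (xi_pos Eij) (nu_pos j)) K0 xiN_lim.
near=> n => _.
have s1 : 1 <= s n by near: n; exact: sqrt_nat_ge.
have hK : K * s n <= xi i j * (Nn n j)%:R by near: n; exact: xiN_ge.
have hI : 1 + I%:R <= (1 + I%:R) * s n by rewrite ler_peMr // addr_ge0.
have hd : - (`|delta i j| * s n) <= delta i j * s n.
  by rewrite -mulNr ler_wpM2r ?(le_trans ler01 s1) // lerNl -normrN ler_norm.
have := Nij_dist n Eij; have := correction_dist n Eij.
rewrite !ler_norml => /andP[c1 _] /andP[r1 _].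
rewrite -(ler0z R) intrD -pmulrn /K !mulrDl in hK *; lra.
Unshelve. all: by end_near.
Qed.

Lemma Ntilde_real : \forall n \near \oo, forall i j, E i j ->
  (Ntilde n i j)%:R = (Nij n i j)%:R + (correction n i j)%:~R :> R.
Proof.
apply: filterS corrected_ge0 => n ge0 i j Eij.
by rewrite natr_absz ger0_norm ?ge0 // intrD -pmulrn.
Qed.

Lemma Ntilde_colsum : \forall n \near \oo, forall j,
  (\sum_(i < I | E i j) Ntilde n i j)%N = Nn n j.
Proof.
apply: filterS Ntilde_real => n Nt_real j; apply/eqP; rewrite -(eqr_nat R) natr_sum.
rewrite (eq_bigr (fun i => (Nij n i j)%:R + (correction n i j)%:~R)) => [|i]; last exact: Nt_real.
by rewrite big_split /= -natr_sum Nij_sum -rmorph_sum /= balanced_round_colsum addr0.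
Qed.

Lemma Ntilde_close : \forall n \near \oo, forall i j, E i j ->
  `|(Nij n i j)%:R - (Ntilde n i j)%:R| <=
    (1 + I%:R + \sum_(k < I) \sum_(l < J) `|delta k l|) * s n.
Proof.
have s1 := sqrt_nat_ge (@ler01 R).
near=> n => i j Eij.
have s_ge1 : 1 <= s n by near: n.
rewrite (near Ntilde_real n) // opprD addrA subrr add0r normrN.
have corr_le : `|(correction n i j)%:~R| <= I%:R + `|delta i j| * s n :> R.
  have := ler_normD ((correction n i j)%:~R - delta i j * s n) (delta i j * s n).
  rewrite subrK normrM (ger0_norm (le_trans ler01 s_ge1)).
  have := correction_dist n Eij; lra.
have hI : I%:R <= I%:R * s n by rewrite ler_peMr.
have hd : `|delta i j| * s n <= (\sum_(k < I) \sum_(l < J) `|delta k l|) * s n.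
  by rewrite ler_wpM2r ?(le_trans ler01 s_ge1) ?entry_le_sum_norm.
rewrite !mulrDl mul1r; lra.
Unshelve. all: by end_near.
Qed.

Lemma Ntilde_expansion i j : E i j ->
  (fun n : nat => ((Ntilde n i j)%:R - xi i j * (Nn n j)%:R) / s n) @ \oo --> delta i j.
Proof.
move=> Eij.
pose err n := (Ntilde n i j)%:R - xi i j * (Nn n j)%:R - delta i j * s n.
have err_small : (fun n => err n / s n) @ \oo --> 0.
  apply: (@bounded_div_sqrt_cvg0 R err (1 + I%:R)); first by rewrite addr_ge0.
  apply: filterS Ntilde_real => n Nt_real.
  rewrite /err Nt_real //.
  have := Nij_dist n Eij; have := correction_dist n Eij.
  set a := _ - delta i j * s n; set b := _ - xi i j * _ => ha hb.
  have -> : (Nij n i j)%:R + (correction n i j)%:~R - xi i j * (Nn n j)%:R -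
     delta i j * s n = b + a by rewrite /a /b; ring.
  by apply: le_trans (ler_normD _ _) _; lra.
suff expand : \forall n \near \oo, err n / s n + delta i j =
    ((Ntilde n i j)%:R - xi i j * (Nn n j)%:R) / s n.
  have lim_sum : (fun n => err n / s n + delta i j) @ \oo --> delta i j.
    by rewrite -[X in _ --> X]add0r; apply: cvgD => //; exact: cvg_cst.
  exact: cvg_trans (near_eq_cvg expand) lim_sum.
have s1 := sqrt_nat_ge (@ler01 R).
near=> n.
have s_pos : 0 < s n by apply: lt_le_trans ltr01 _; near: n.
by rewrite /err; field; rewrite gt_eqF.
Unshelve. all: by end_near.
Qed.

End Correction.

Section ImbalanceExpansion.
Variables (R : realType) (I J : nat) (E : 'I_I -> 'I_J -> bool) (i : 'I_I).
Variables (lamn : nat -> 'I_I -> R) (mun : nat -> 'I_I -> 'I_J -> R) (Nn : nat -> 'I_J -> nat).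
Variables (lam : 'I_I -> R) (mu : 'I_I -> 'I_J -> R) (nu : 'I_J -> R).
Variables (lamh : 'I_I -> R) (muh : 'I_I -> 'I_J -> R) (nuh : 'I_J -> R).
Variable xi : 'I_I -> 'I_J -> R.
Hypothesis lam_fluid : lam i = \sum_(j < J | E i j) mu i j * nu j * xi i j.
Hypothesis N_lim : forall j, (fun n : nat => (Nn n j)%:R / n%:R) @ \oo --> nu j.
Hypothesis mu_lim : forall j, E i j -> (fun n : nat => mun n i j) @ \oo --> mu i j.
Hypothesis lamh_lim :
  (fun n : nat => (lamn n i - n%:R * lam i) / Num.sqrt (n%:R : R)) @ \oo --> lamh i.
Hypothesis muh_lim : forall j, E i j ->
  (fun n : nat => Num.sqrt (n%:R : R) * (mun n i j - mu i j)) @ \oo --> muh i j.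
Hypothesis nuh_lim : forall j,
  (fun n : nat => Num.sqrt (n%:R : R) * ((Nn n j)%:R / n%:R - nu j)) @ \oo --> nuh j.
Local Notation s n := (Num.sqrt (n%:R : R)).

Lemma imbalance_expansion (y : nat -> 'I_J -> R) (delta : 'I_J -> R) (c : R) :
  (forall j, E i j ->
     (fun n : nat => (y n j - xi i j * (Nn n j)%:R) / s n) @ \oo --> delta j) ->
  (fun n : nat => (lamn n i - \sum_(j < J | E i j) mun n i j * y n j + c * s n) / s n)
  @ \oo --> lamh i - \sum_(j < J | E i j)
                       (xi i j * (muh i j * nu j + mu i j * nuh j) + mu i j * delta j) + c.
Proof.
move=> y_lim.
pose term n j := xi i j * ((s n * (mun n i j - mu i j)) * ((Nn n j)%:R / n%:R)
                   + mu i j * (s n * ((Nn n j)%:R / n%:R - nu j)))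
                 + mun n i j * ((y n j - xi i j * (Nn n j)%:R) / s n).
have term_lim j : E i j -> term^~ j @ \oo -->
    xi i j * (muh i j * nu j + mu i j * nuh j) + mu i j * delta j.
  move=> Eij; apply: cvgD; apply: cvgM; try exact: cvg_cst.
  - by apply: cvgD; apply: cvgM; [exact: muh_lim | exact: N_lim | exact: cvg_cst | exact: nuh_lim].
  - exact: mu_lim.
  - exact: y_lim.
(* the expansion is an exact identity as soon as n > 0 *)
suff expand : \forall n \near \oo, (lamn n i - n%:R * lam i) / s n
    - \sum_(j < J | E i j) term n j + c =
    (lamn n i - \sum_(j < J | E i j) mun n i j * y n j + c * s n) / s n.
  apply: cvg_trans (near_eq_cvg expand) _.
  apply: cvgD; last exact: cvg_cst.
  apply: cvgB; first exact: lamh_lim.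
  by apply: cvg_big term_lim => //; exact: add_continuous.
have s1 := sqrt_nat_ge (@ler01 R).
near=> n.
have s_pos : 0 < s n by apply: lt_le_trans ltr01 _; near: n.
have n_sq : n%:R = s n * s n by rewrite -expr2 sqr_sqrtr.
rewrite /term; set t := s n; rewrite -/t in s_pos n_sq.
rewrite (eq_bigr (fun j => mun n i j * y n j / t - t * (mu i j * nu j * xi i j))); last first.
  by move=> j _; rewrite n_sq; field; rewrite gt_eqF.
rewrite sumrB -mulr_suml -mulr_sumr -lam_fluid n_sq.
by field; rewrite gt_eqF.
Unshelve. all: by end_near.
Qed.

End ImbalanceExpansion.

Unset Implicit Arguments. Set Strict Implicit. Set Printing Implicit Defensive.

Theorem lemma5 (R : realType) (I J : nat) (E : 'I_I -> 'I_J -> bool)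
  (hTree : is_tree E)
  (lamn : nat -> 'I_I -> R) (mun : nat -> 'I_I -> 'I_J -> R)
  (Nn : nat -> 'I_J -> nat)
  (lam : 'I_I -> R) (mu : 'I_I -> 'I_J -> R) (nu : 'I_J -> R)
  (lamh : 'I_I -> R) (muh : 'I_I -> 'I_J -> R) (nuh : 'I_J -> R)
  (hlamn_pos : forall n i, 0 < lamn n i)
  (hmun_pos : forall n i j, E i j -> 0 < mun n i j)
  (hlam_pos : forall i, 0 < lam i)
  (hnu_pos : forall j, 0 < nu j)
  (hmu_pos : forall i j, E i j -> 0 < mu i j)
  (hlam_lim : forall i, (fun n : nat => lamn n i / n%:R) @ \oo --> lam i)
  (hN_lim : forall j, (fun n : nat => (Nn n j)%:R / n%:R) @ \oo --> nu j)
  (hmu_lim : forall i j, E i j -> (fun n : nat => mun n i j) @ \oo --> mu i j)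
  (hlamh_lim : forall i,
     (fun n : nat => (lamn n i - n%:R * lam i) / Num.sqrt (n%:R : R)) @ \oo --> lamh i)
  (hmuh_lim : forall i j, E i j ->
     (fun n : nat => Num.sqrt (n%:R : R) * (mun n i j - mu i j)) @ \oo --> muh i j)
  (hnuh_lim : forall j,
     (fun n : nat => Num.sqrt (n%:R : R) * ((Nn n j)%:R / n%:R - nu j)) @ \oo --> nuh j)
  (xi : 'I_I -> 'I_J -> R)
  (hCRP : crp_unique_solution E mu nu lam xi)
  (hxi_sum : forall j, \sum_(i < I) xi i j = 1)
  (hxi_pos : forall i j, E i j -> 0 < xi i j)
  (Nij : nat -> 'I_I -> 'I_J -> nat)
  (hNij_floor : forall n i j, E i j -> Num.floor (xi i j * (Nn n j)%:R) <= (Nij n i j)%:Z)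
  (hNij_ceil : forall n i j, E i j -> (Nij n i j)%:Z <= Num.ceil (xi i j * (Nn n j)%:R))
  (hNij_sum : forall n j, (\sum_(i < I | E i j) Nij n i j)%N = Nn n j)
  (p : 'I_I -> R)
  (hp_pos : forall i, 0 < p i)
  (hp_sum : \sum_(i < I) p i = 1)
  (vartheta : R)
  (hvartheta : swss_value E mu lamh (theta E mu muh nu nuh xi) p vartheta)
  (hvartheta_pos : 0 < vartheta) :
  exists (Nt : nat -> 'I_I -> 'I_J -> nat) (C0 : R),
    0 < C0 /\
    (forall i,
       (fun n : nat =>
          (lamn n i - \sum_(j < J | E i j) mun n i j * (Nt n i j)%:R
             + vartheta * p i * Num.sqrt (n%:R : R)) / Num.sqrt (n%:R : R))
       @ \oo --> 0) /\
    (\forall n \near \oo,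
       (forall i j, E i j ->
          `|(Nij n i j)%:R - (Nt n i j)%:R| <= C0 * Num.sqrt (n%:R : R)) /\
       (forall j, (\sum_(i < I | E i j) Nt n i j)%N = Nn n j)).
Proof.
have [conn _] := hTree.
have [[kappa kap_feas] _] := hvartheta.
have kap_tight := swss_tight hmu_pos conn hp_pos hvartheta kap_feas.
have [_ [_ kap_th]] := kap_feas.
have [[xi0 [_ xi_lam]] _] := hCRP.
(* xi vanishes off the edges, so sums over I and over I(j) agree *)
have xi_sum j : \sum_(i < I | E i j) xi i j = 1.
  rewrite -(hxi_sum j) [RHS](bigID (fun i => E i j)) /=.
  by rewrite [X in _ = _ + X]big1 ?addr0 // => i /xi0.
have lam_fluid i : lam i = \sum_(j < J | E i j) mu i j * nu j * xi i j.
  rewrite -(xi_lam i) [LHS](bigID (fun j => E i j)) /=.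
  by rewrite [X in _ + X = _]big1 ?addr0 // => j /xi0 ->; rewrite mulr0.
pose delta i j := kappa i j - xi i j * nuh j - muh i j / mu i j * (xi i j * nu j).
have delta_sum j : \sum_(i < I | E i j) delta i j = 0.
  rewrite /delta !big_split /= !sumrN -mulr_suml xi_sum kap_th /theta; lra.
pose C0 := 1 + I%:R + \sum_(k < I) \sum_(l < J) `|delta k l|.
exists (Ntilde E Nij delta), C0; split; [|split].
- have S0 : 0 <= \sum_(k < I) \sum_(l < J) `|delta k l|.
    by apply: sumr_ge0 => k _; exact: sumr_ge0.
  by rewrite /C0; have := ler0n R I; lra.
- move=> i.
  have := imbalance_expansion (lam_fluid i) hN_lim (hmu_lim i) (hlamh_lim i)
    (hmuh_lim i) hnuh_lim (c := vartheta * p i)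
    (Ntilde_expansion hnu_pos hN_lim hxi_pos hNij_floor hNij_ceil delta_sum (i:=i)).
  (* the limit vanishes because the i-th SWSS constraint is tight *)
  suff -> : lamh i - \sum_(j < J | E i j) (xi i j * (muh i j * nu j + mu i j * nuh j)
      + mu i j * delta i j) + vartheta * p i = 0 by [].
  rewrite (eq_bigr (fun j => mu i j * kappa i j)) => [|j Eij]; last first.
    by rewrite /delta; field; rewrite gt_eqF // hmu_pos.
  by rewrite kap_tight /load; lra.
- apply: filterS2 (Ntilde_close hnu_pos hN_lim hxi_pos hNij_floor hNij_ceil delta_sum)
    (Ntilde_colsum hnu_pos hN_lim hxi_pos hNij_floor hNij_ceil hNij_sum delta_sum).
  by move=> n close colsum; split.
Qed.
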